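(* Let $\sigma_E^2=b\,\sigma_A^2$ for a fixed constant $b\in(0,\infty)$. Then for every fixed $r_A>0$, $r_E>0$, as $|\rho|\to1$ and $\sigma_A^2\to0$ (hence $\sigma_E^2\to 0$), $$f_{\hat R_A,\hat R_E}(r_A,r_E)=\frac{2r_Ee^{-r_E^2/p}}{p}\cdot\frac{e^{-\frac{(r_A-|\rho|r_E)^2}{p(1-|\rho|^2)+\sigma_A^2+\sigma_E^2}}}{\sqrt{\pi\big(p(1-|\rho|^2)+\sigma_A^2+\sigma_E^2\big)}}+O\Big(\sqrt{1-|\rho|^2+\sigma_A^2}\Big),$$ i.e. the product of a Rayleigh density (of $\hat R_E$, scale $\sqrt{p/2}$) and a conditional normal density of $\hat R_A$ with mean $|\rho|r_E$ and variance $\big(p(1-|\rho|^2)+\sigma_A^2+\sigma_E^2\big)/2$. The same holds for $f_{\hat R_B,\hat R_E}$ with $A$ replaced by $B$, under $\sigma_E^2=b'\sigma_B^2$ for a fixed $b'\in(0,\infty)$.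
   Context: Fix $p>0$, $\rho\in\mathbb C$ with $|\rho|<1$, and $\sigma_A^2,\sigma_B^2,\sigma_E^2>0$. Let $(H,H_E)$ be a zero-mean circularly-symmetric complex Gaussian (ZMCSCG) vector with covariance $p\begin{pmatrix}1&\rho\\ \bar\rho&1\end{pmatrix}$; let $W_A,W_B,W_E$ be ZMCSCG with variances $\sigma_A^2,\sigma_B^2,\sigma_E^2$, mutually independent and independent of $(H,H_E)$. Define $\hat H_A=H+W_A$, $\hat H_B=H+W_B$, $\hat H_E=H_E+W_E$, envelopes $\hat R_X=|\hat H_X|$, and let $f_{\hat R_A,\hat R_E}$ denote the joint density of $(\hat R_A,\hat R_E)$. The $O(\cdot)$ term is bounded in absolute value by a constant (possibly depending on $r_A,r_E,p,b$) times $\sqrt{1-|\rho|^2+\sigma_A^2}$ in the limit. *)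

From Stdlib Require Import Reals.
From Coquelicot Require Import Coquelicot.
Open Scope R_scope.

(* The complex correlation coefficient rho is represented by its real part
   [rr] and imaginary part [ri]; |rho|^2 = rr^2 + ri^2. *)
Definition rho_abs2 (rr ri : R) : R := rr ^ 2 + ri ^ 2.

(* Density (w.r.t. Lebesgue measure on C^2 = R^4) of a zero-mean circularly
   symmetric complex Gaussian vector (Z1, Z2) with Hermitian covariance
   K = [[k11, k12], [conj k12, k22]], k12 = k12r + i k12i:
     f(z) = exp(- z^H K^{-1} z) / (pi^2 det K),
   z1 = x1 + i y1, z2 = x2 + i y2. *)
Definition cscg2_density (k11 k22 k12r k12i : R) (x1 y1 x2 y2 : R) : R :=
  let D := k11 * k22 - (k12r ^ 2 + k12i ^ 2) in
  (* Re (k12 * conj z1 * z2) *)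
  let re_cross := k12r * (x1 * x2 + y1 * y2) - k12i * (x1 * y2 - y1 * x2) in
  let q := (k22 * (x1 ^ 2 + y1 ^ 2) + k11 * (x2 ^ 2 + y2 ^ 2) - 2 * re_cross) / D in
  exp (- q) / (PI ^ 2 * D).

(* Joint density of the envelopes (|Z1|, |Z2|) at (r1, r2) > 0: polar change
   of variables in each complex coordinate. *)
Definition envelope_density (k11 k22 k12r k12i : R) (r1 r2 : R) : R :=
  r1 * r2 *
  RInt (fun t1 =>
    RInt (fun t2 =>
      cscg2_density k11 k22 k12r k12i
        (r1 * cos t1) (r1 * sin t1) (r2 * cos t2) (r2 * sin t2))
      0 (2 * PI))
    0 (2 * PI).

(* Model: (H, H_E) ZMCSCG with covariance p [[1, rho], [conj rho, 1]];
   W_X, W_E independent ZMCSCG with variances sX, sE, independent of (H,H_E).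
   Then (H + W_X, H_E + W_E) is ZMCSCG with covariance
   [[p + sX, p rho], [p conj rho, p + sE]].  f_{R_X, R_E}: *)
Definition f_RX_RE (p rr ri sX sE : R) (rX rE : R) : R :=
  envelope_density (p + sX) (p + sE) (p * rr) (p * ri) rX rE.

Definition approx_density (p rr ri sX sE : R) (rX rE : R) : R :=
  let a := sqrt (rho_abs2 rr ri) in
  let V := p * (1 - rho_abs2 rr ri) + sX + sE in
  (2 * rE * exp (- rE ^ 2 / p) / p) *
  (exp (- (rX - a * rE) ^ 2 / V) / sqrt (PI * V)).

Definition envelope_asymptotic (p b rX rE : R) : Prop :=
  exists C delta : R, 0 < delta /\
    forall rr ri s : R,
      rho_abs2 rr ri < 1 -> 0 < s ->
      1 - rho_abs2 rr ri + s < delta ->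
      Rabs (f_RX_RE p rr ri s (b * s) rX rE - approx_density p rr ri s (b * s) rX rE)
        <= C * sqrt (1 - rho_abs2 rr ri + s).

From Stdlib Require Import Reals Lra Lia ZArith.
From Coquelicot Require Import Coquelicot.
Open Scope R_scope.

(* Write a = |rho|, s = sigma_X^2, sigma_E^2 = b s and t = 1 - a^2 + s.
   1. Closed form.  Integrating the bivariate complex Gaussian density over
      the two phases and shifting the second phase by the argument of the
      correlation leaves one phase integral:
        f(r1, r2) = 2 r1 r2 exp (-Q/D) / (pi D) * J(kappa),
      with D the covariance determinant, kappa = 2 r1 r2 p a / D and
      J(k) = int_0^{2pi} exp (-k (1 + cos u)) = 2 int_0^pi exp (-2k cos^2).
   2. Laplace asymptotics.  Comparing exp (-2k cos^2) with
      sin^{2m} = (1 - cos^2)^m for m close to 2k, and using Wallis'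
      integrals W n (whose squares lie between 2pi/(n+1) and 2pi/n), gives
      J(k)/2 = sqrt (pi / (2k)) (1 + O(1/k)).
   3. Off the diagonal (r_X <> r_E) both the density and its approximation
      are O(sqrt t): their Gaussian exponents are bounded below by c/t.
   4. On the diagonal, kappa is of order 1/t, and the prefactors and the
      exponents of the two densities agree to relative order t; the
      difference is therefore O(t) times the approximation, i.e. O(sqrt t). *)

Ltac positivity :=
  try match goal with |- 0 <= _ => apply Rlt_le end;
  repeat (first [ lra | apply Rmult_lt_0_compat | apply pow_lt
                | apply Rplus_lt_0_compat | apply Rinv_0_lt_compat ]); try lra.

Lemma ex_RInt_derivable (f : R -> R) :
  (forall x, ex_derive f x) -> forall a b, ex_RInt f a b.
Proof.
  intros Hf a b. apply (@ex_RInt_continuous R_CompleteNormedModule).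
  intros z _. now apply (@ex_derive_continuous R_AbsRing R_NormedModule).
Qed.

Lemma RInt_ext_R (f g : R -> R) a b :
  (forall x, Rmin a b < x < Rmax a b -> f x = g x) -> RInt f a b = RInt g a b.
Proof. apply (RInt_ext (V := R_CompleteNormedModule)). Qed.

Lemma RInt_plus_R (f g : R -> R) a b : ex_RInt f a b -> ex_RInt g a b ->
  RInt (fun t => f t + g t) a b = RInt f a b + RInt g a b.
Proof. apply (RInt_plus (V := R_CompleteNormedModule)). Qed.

Lemma RInt_scal_R (f : R -> R) a b c : ex_RInt f a b ->
  RInt (fun t => c * f t) a b = c * RInt f a b.
Proof. apply (RInt_scal (V := R_CompleteNormedModule)). Qed.

Lemma RInt_const_R a b (c : R) : RInt (fun _ => c) a b = (b - a) * c.
Proof. exact (RInt_const (V := R_CompleteNormedModule) a b c). Qed.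

Lemma exp_le_mono x y : x <= y -> exp x <= exp y.
Proof.
  intros H. destruct (Rle_lt_or_eq_dec _ _ H) as [Hlt | ->].
  - now apply Rlt_le, exp_increasing.
  - apply Rle_refl.
Qed.

Lemma sq_le a b : 0 <= b -> a ^ 2 <= b ^ 2 -> a <= b.
Proof. intros. nra. Qed.

(** Wallis integrals  W n = ∫_0^π sin^n. *)

Definition wallis (n : nat) : R := RInt (fun t => sin t ^ n) 0 PI.

Lemma ex_RInt_sin_pow n a b : ex_RInt (fun t => sin t ^ n) a b.
Proof. apply ex_RInt_derivable. intros x. auto_derive. auto. Qed.

(* Integration by parts: (n+2) W (n+2) = (n+1) W n, since
   (sin^(n+1) cos)' = (n+1) sin^n - (n+2) sin^(n+2) and the primitive
   vanishes at 0 and π. *)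
Lemma wallis_rec n : INR (n + 2) * wallis (n + 2) = INR (n + 1) * wallis n.
Proof.
  assert (Hderiv : is_RInt (fun t => INR (n + 1) * sin t ^ n + (- INR (n + 2)) * sin t ^ (n + 2))
                     0 PI (minus (sin PI ^ (n + 1) * cos PI) (sin 0 ^ (n + 1) * cos 0))).
  { apply (is_RInt_derive (fun t => sin t ^ (n + 1) * cos t)).
    - intros x _. auto_derive; auto.
      replace (n + 1)%nat with (S n) by lia. replace (n + 2)%nat with (S (S n)) by lia.
      rewrite !S_INR. cbn [pred pow].
      assert (Hcos : cos x * cos x = 1 - sin x * sin x)
        by (assert (Hpyth := sin2_cos2 x); unfold Rsqr in Hpyth; lra).
      replace (1 * cos x * ((INR n + 1) * sin x ^ n) * cos x)
        with ((INR n + 1) * sin x ^ n * (cos x * cos x)) by ring.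
      rewrite Hcos. ring.
    - intros x _. apply (@ex_derive_continuous R_AbsRing R_NormedModule). auto_derive. auto. }
  apply (is_RInt_unique (V := R_CompleteNormedModule)) in Hderiv.
  rewrite (RInt_plus_R (fun t => INR (n + 1) * sin t ^ n)
             (fun t => - INR (n + 2) * sin t ^ (n + 2))) in Hderiv
    by (apply ex_RInt_derivable; intros x; auto_derive; auto).
  rewrite (RInt_scal_R (fun t => sin t ^ n)), (RInt_scal_R (fun t => sin t ^ (n + 2)))
    in Hderiv by apply ex_RInt_sin_pow.
  rewrite sin_PI, sin_0, pow_i, !Rmult_0_l, minus_eq_zero in Hderiv by lia.
  unfold wallis. change zero with 0 in Hderiv. lra.
Qed.

Lemma wallis_0 : wallis 0 = PI.
Proof. unfold wallis. simpl. rewrite RInt_const_R. ring. Qed.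

Lemma wallis_1 : wallis 1 = 2.
Proof.
  unfold wallis. apply is_RInt_unique.
  replace 2 with (minus (- cos PI) (- cos 0))
    by (rewrite cos_PI, cos_0; unfold minus, plus, opp; simpl; ring).
  apply (is_RInt_derive (fun t => - cos t)).
  - intros x _. auto_derive; auto. ring.
  - intros x _. apply (@ex_derive_continuous R_AbsRing R_NormedModule). auto_derive. auto.
Qed.

Lemma wallis_nonneg n : 0 <= wallis n.
Proof.
  apply RInt_ge_0. apply Rlt_le, PI_RGT_0. apply ex_RInt_sin_pow.
  intros x Hx. apply pow_le, sin_ge_0; lra.
Qed.

Lemma wallis_decr n : wallis (n + 1) <= wallis n.
Proof.
  apply RInt_le. apply Rlt_le, PI_RGT_0. apply ex_RInt_sin_pow. apply ex_RInt_sin_pow.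
  intros x Hx. replace (n + 1)%nat with (S n) by lia. simpl.
  assert (0 <= sin x) by (apply sin_ge_0; lra).
  assert (sin x <= 1) by apply SIN_bound.
  assert (0 <= sin x ^ n) by (apply pow_le; lra).
  nra.
Qed.

(* The recursion makes (n+1) W n W (n+1) constant, equal to 2π. *)
Lemma wallis_prod n : wallis n * wallis (n + 1) = 2 * PI / INR (n + 1).
Proof.
  induction n as [|n IHn].
  - change (0 + 1)%nat with 1%nat. rewrite wallis_0, wallis_1. simpl. field.
  - assert (Hrec := wallis_rec n).
    replace (S n + 1)%nat with (n + 2)%nat by lia. replace (S n) with (n + 1)%nat by lia.
    assert (0 < INR (n + 1)) by (apply lt_0_INR; lia).
    assert (0 < INR (n + 2)) by (apply lt_0_INR; lia).
    apply Rmult_eq_reg_l with (INR (n + 2)); [|lra].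
    replace (INR (n + 2) * (wallis (n + 1) * wallis (n + 2)))
      with (wallis (n + 1) * (INR (n + 2) * wallis (n + 2))) by ring.
    rewrite Hrec.
    replace (wallis (n + 1) * (INR (n + 1) * wallis n))
      with (INR (n + 1) * (wallis n * wallis (n + 1))) by ring.
    rewrite IHn. replace (n + 1 + 1)%nat with (n + 2)%nat by lia. field. lra.
Qed.

(* Hence, W being decreasing, W n ^ 2 lies between 2π/(n+1) and 2π/n. *)
Lemma wallis_sq_lower n : 2 * PI / INR (n + 1) <= wallis n ^ 2.
Proof.
  rewrite <- wallis_prod. assert (H1 := wallis_decr n). assert (H2 := wallis_nonneg (n + 1)).
  simpl. nra.
Qed.

Lemma wallis_sq_upper n : (1 <= n)%nat -> wallis n ^ 2 <= 2 * PI / INR n.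
Proof.
  intros Hn. destruct n as [|n]; [lia|].
  replace (S n) with (n + 1)%nat by lia.
  rewrite <- wallis_prod. assert (H1 := wallis_decr n). assert (H2 := wallis_nonneg (n + 1)).
  simpl. nra.
Qed.

Lemma wallis_le_of_sq n x : (1 <= n)%nat -> 0 <= x -> 2 * PI / INR n <= x ^ 2 -> wallis n <= x.
Proof.
  intros Hn Hx Hsq. apply sq_le; [exact Hx|].
  eapply Rle_trans; [apply wallis_sq_upper, Hn | exact Hsq].
Qed.

Lemma wallis_second_difference n :
  wallis (2 * n) - 2 * wallis (2 * n + 2) + wallis (2 * n + 4) =
  3 * wallis (2 * n) / ((2 * INR n + 2) * (2 * INR n + 4)).
Proof.
  assert (H1 := wallis_rec (2 * n)). assert (H2 := wallis_rec (2 * n + 2)).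
  replace (2 * n + 2 + 2)%nat with (2 * n + 4)%nat in H2 by lia.
  replace (2 * n + 2 + 1)%nat with (2 * n + 3)%nat in H2 by lia.
  rewrite !plus_INR, !mult_INR in H1, H2. simpl INR in H1, H2.
  assert (0 <= INR n) by apply pos_INR.
  apply Rmult_eq_reg_r with ((2 * INR n + 2) * (2 * INR n + 4)); [|nra].
  unfold Rdiv. rewrite Rmult_assoc, Rinv_l by nra.
  set (w0 := wallis (2 * n)) in *. set (w2 := wallis (2 * n + 2)) in *.
  set (w4 := wallis (2 * n + 4)) in *.
  nra.
Qed.

Lemma is_RInt_wallis n : is_RInt (fun t => sin t ^ n) 0 PI (wallis n).
Proof. apply (RInt_correct (V := R_CompleteNormedModule)), ex_RInt_sin_pow. Qed.

(** Comparison of  exp (- m x)  with  (1 - x) ^ m  on [0, 1]. *)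

Lemma exp_pow x n : exp x ^ n = exp (INR n * x).
Proof.
  induction n as [|n IHn].
  - simpl. now rewrite Rmult_0_l, exp_0.
  - rewrite S_INR. simpl. rewrite IHn, <- exp_plus. f_equal. ring.
Qed.

Lemma pow_one_minus_le_exp x m : 0 <= x <= 1 -> (1 - x) ^ m <= exp (- (INR m * x)).
Proof.
  intros Hx. replace (- (INR m * x)) with (INR m * - x) by ring.
  rewrite <- exp_pow. apply pow_incr. split; [lra|].
  assert (H := exp_ineq1_le (- x)). lra.
Qed.

(* A converse at first order: 1 - x >= exp (- x / (1 - x)) >= exp (- (x + 2 x²)). *)
Lemma exp_le_one_minus x : 0 <= x <= 1 / 2 -> exp (- (x + 2 * x ^ 2)) <= 1 - x.
Proof.
  intros Hx.
  assert (Hinv : exp (- (x / (1 - x))) <= 1 - x).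
  { assert (H := exp_ineq1_le (x / (1 - x))).
    replace (1 + x / (1 - x)) with (/ (1 - x)) in H by (field; lra).
    rewrite exp_Ropp. replace (1 - x) with (/ / (1 - x)) at 2 by (field; lra).
    apply Rinv_le_contravar; [apply Rinv_0_lt_compat; lra | exact H]. }
  eapply Rle_trans; [|exact Hinv]. apply exp_le_mono.
  assert (x / (1 - x) <= x + 2 * x ^ 2); [|lra].
  apply Rmult_le_reg_r with (1 - x); [lra|].
  unfold Rdiv. rewrite Rmult_assoc, Rinv_l by lra. nra.
Qed.

(* Upper bound of exp (- m x) by (1 - x) ^ m, with an error that is
   O(m x² (1 - x) ^ k) for k <= m / 2, plus an exponentially small term
   covering x > 1/2. *)
Lemma exp_le_pow_one_minus x m k : 0 <= x <= 1 -> (2 * k <= m)%nat ->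
  exp (- (INR m * x)) <= (1 - x) ^ m + 2 * INR m * x ^ 2 * (1 - x) ^ k + exp (- (INR m / 2)).
Proof.
  intros Hx Hkm.
  assert (Hm0 : 0 <= INR m) by apply pos_INR.
  assert (Hk0 : 0 <= INR k) by apply pos_INR.
  assert (Hkm' : 2 * INR k <= INR m).
  { replace 2 with (INR 2) by (simpl; lra). rewrite <- mult_INR. apply le_INR. lia. }
  assert (P1 : 0 <= (1 - x) ^ m) by (apply pow_le; lra).
  assert (P2 : 0 <= (1 - x) ^ k) by (apply pow_le; lra).
  assert (P3 : 0 < exp (- (INR m / 2))) by apply exp_pos.
  destruct (Rle_lt_dec x (1 / 2)) as [Hsmall | Hlarge].
  - assert (A := exp_le_one_minus x (conj (proj1 Hx) Hsmall)).
    assert (Bm : exp (- (INR m * x)) * exp (- (2 * INR m * x ^ 2)) <= (1 - x) ^ m).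
    { rewrite <- exp_plus.
      replace (- (INR m * x) + - (2 * INR m * x ^ 2)) with (INR m * - (x + 2 * x ^ 2)) by ring.
      rewrite <- exp_pow. apply pow_incr. split; [apply Rlt_le, exp_pos | exact A]. }
    assert (Bk : exp (- (INR m * x)) <= (1 - x) ^ k).
    { eapply Rle_trans; [|apply pow_incr; split; [apply Rlt_le, exp_pos | exact A]].
      rewrite exp_pow. apply exp_le_mono.
      assert (2 * x ^ 2 <= x) by nra.
      assert (INR k * (x + 2 * x ^ 2) <= INR k * (2 * x)) by (apply Rmult_le_compat_l; lra).
      nra. }
    assert (C : 1 - 2 * INR m * x ^ 2 <= exp (- (2 * INR m * x ^ 2)))
      by (assert (T := exp_ineq1_le (- (2 * INR m * x ^ 2))); lra).
    assert (Q : 0 <= 2 * INR m * x ^ 2) by (apply Rmult_le_pos; [lra | apply pow2_ge_0]).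
    assert (E0 : 0 < exp (- (INR m * x))) by apply exp_pos.
    nra.
  - assert (exp (- (INR m * x)) <= exp (- (INR m / 2))) by (apply exp_le_mono; nra).
    assert (0 <= 2 * INR m * x ^ 2 * (1 - x) ^ k).
    { apply Rmult_le_pos; [apply Rmult_le_pos; [lra | apply pow2_ge_0] | auto]. }
    lra.
Qed.

(** The Laplace integral  L k = ∫_0^π exp (- 2 k cos² t),  sandwiched between
    even Wallis integrals via  sin^(2m) = (1 - cos²)^m. *)

Definition laplace (k : R) : R := RInt (fun t => exp (- (2 * k * cos t ^ 2))) 0 PI.

Lemma ex_RInt_laplace k a b : ex_RInt (fun t => exp (- (2 * k * cos t ^ 2))) a b.
Proof. apply ex_RInt_derivable. intros. auto_derive. auto. Qed.

Lemma is_RInt_laplace k : is_RInt (fun t => exp (- (2 * k * cos t ^ 2))) 0 PI (laplace k).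
Proof. apply (RInt_correct (V := R_CompleteNormedModule)), ex_RInt_laplace. Qed.

Lemma sin_pow_even t m : sin t ^ (2 * m) = (1 - cos t ^ 2) ^ m.
Proof.
  rewrite pow_mult. f_equal.
  assert (H := sin2_cos2 t). unfold Rsqr in H. simpl. lra.
Qed.

Lemma cos_sq_bound t : 0 <= cos t ^ 2 <= 1.
Proof.
  split; [apply pow2_ge_0|].
  assert (H := sin2_cos2 t). unfold Rsqr in H. simpl. nra.
Qed.

(* For m >= 2k:  sin^(2m) = (1 - cos²)^m <= exp (- m cos²) <= exp (- 2k cos²). *)
Lemma laplace_ge_wallis k m : 2 * k <= INR m -> wallis (2 * m) <= laplace k.
Proof.
  intros Hm.
  apply (is_RInt_le _ _ 0 PI _ _ (Rlt_le _ _ PI_RGT_0) (is_RInt_wallis _) (is_RInt_laplace k)).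
  intros t _. rewrite sin_pow_even. eapply Rle_trans.
  - apply pow_one_minus_le_exp, cos_sq_bound.
  - apply exp_le_mono. assert (T := cos_sq_bound t). nra.
Qed.

(* For m <= 2k, integrating [exp_le_pow_one_minus] at x = cos² t bounds L k by
   W (2m) plus a second difference of Wallis integrals and a tail term. *)
Lemma laplace_le_wallis k m n : INR m <= 2 * k -> (2 * n <= m)%nat ->
  laplace k <= wallis (2 * m)
    + 2 * INR m * (wallis (2 * n) - 2 * wallis (2 * n + 2) + wallis (2 * n + 4))
    + PI * exp (- (INR m / 2)).
Proof.
  intros Hm Hn.
  assert (Hbound : is_RInt (fun t => sin t ^ (2 * m)
      + 2 * INR m * (sin t ^ (2 * n) + -2 * sin t ^ (2 * n + 2) + sin t ^ (2 * n + 4))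
      + exp (- (INR m / 2))) 0 PI
    (wallis (2 * m)
      + 2 * INR m * (wallis (2 * n) + -2 * wallis (2 * n + 2) + wallis (2 * n + 4))
      + (PI - 0) * exp (- (INR m / 2)))).
  { apply (is_RInt_plus (V := R_NormedModule)); [apply (is_RInt_plus (V := R_NormedModule))|].
    - apply is_RInt_wallis.
    - apply (is_RInt_scal (V := R_NormedModule)).
      apply (is_RInt_plus (V := R_NormedModule)); [|apply is_RInt_wallis].
      apply (is_RInt_plus (V := R_NormedModule)); [apply is_RInt_wallis|].
      apply (is_RInt_scal (V := R_NormedModule)), is_RInt_wallis.
    - apply (is_RInt_const (V := R_NormedModule)). }
  eapply Rle_trans.
  - apply (is_RInt_le _ _ 0 PI _ _ (Rlt_le _ _ PI_RGT_0) (is_RInt_laplace k) Hbound).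
    intros t _. assert (T := cos_sq_bound t).
    eapply Rle_trans; [apply exp_le_mono with (y := - (INR m * cos t ^ 2)); nra|].
    eapply Rle_trans; [apply (exp_le_pow_one_minus _ m n T Hn)|].
    replace (2 * n + 2)%nat with (2 * (n + 1))%nat by lia.
    replace (2 * n + 4)%nat with (2 * (n + 2))%nat by lia.
    rewrite !sin_pow_even.
    replace (n + 2)%nat with (S (S n)) by lia. replace (n + 1)%nat with (S n) by lia.
    simpl pow. right. ring.
  - right. ring.
Qed.

(** Laplace asymptotics  L k = sqrt (π / (2 k)) (1 + O(1/k)). *)

Lemma nat_above (r : R) : 0 <= r -> exists m : nat, r < INR m <= r + 1.
Proof.
  intros Hr. destruct (archimed r) as [Hup1 Hup2].
  assert (Hz : (0 <= up r)%Z) by (apply le_IZR; simpl; lra).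
  exists (Z.to_nat (up r)). rewrite INR_IZR_INZ, Z2Nat.id by auto. lra.
Qed.

Lemma nat_below (r : R) : 0 <= r -> exists m : nat, r - 1 < INR m <= r.
Proof.
  intros Hr. destruct (archimed r) as [Hup1 Hup2].
  assert (Hz : (0 < up r)%Z) by (apply lt_IZR; simpl; lra).
  exists (Z.to_nat (up r - 1)). rewrite INR_IZR_INZ, Z2Nat.id by lia.
  rewrite minus_IZR. simpl. lra.
Qed.

Lemma sqrt_pi_over_2k k : 0 < k ->
  0 < sqrt (PI / (2 * k)) /\ sqrt (PI / (2 * k)) ^ 2 = PI / (2 * k).
Proof.
  intros Hk. assert (HPI := PI_RGT_0). assert (0 < PI / (2 * k)) by (apply Rdiv_lt_0_compat; lra).
  split; [now apply sqrt_lt_R0 | apply pow2_sqrt; lra].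
Qed.

(* Lower bound: take m with 2k < m <= 2k + 1 and use W(2m)^2 >= 2π/(2m+1). *)
Lemma laplace_lower k : 40 <= k -> sqrt (PI / (2 * k)) * (1 - 1 / k) <= laplace k.
Proof.
  intros Hk. assert (HPI := PI_RGT_0).
  destruct (sqrt_pi_over_2k k) as [Hu0 Hu2]; [lra|].
  set (u := sqrt (PI / (2 * k))) in *.
  destruct (nat_above (2 * k)) as [m [Hm1 Hm2]]; [lra|].
  eapply Rle_trans; [|apply (laplace_ge_wallis k m); lra].
  apply sq_le; [apply wallis_nonneg|].
  eapply Rle_trans; [|apply wallis_sq_lower].
  rewrite plus_INR, mult_INR. simpl INR.
  replace ((u * (1 - 1 / k)) ^ 2) with (u ^ 2 * (1 - 1 / k) ^ 2) by ring. rewrite Hu2.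
  unfold Rdiv. apply Rmult_le_reg_r with (2 * k * (2 * INR m + 1)); [nra|].
  field_simplify; try lra.
  apply Rmult_le_reg_r with (k ^ 2); [nra|]. field_simplify; try lra.
  assert (T : (k - 1) ^ 2 * (2 * INR m + 1) <= 4 * k ^ 3) by nra.
  assert (T2 : PI * ((k - 1) ^ 2 * (2 * INR m + 1)) <= PI * (4 * k ^ 3))
    by (apply Rmult_le_compat_l; lra).
  nra.
Qed.

Lemma laplace_tail k m : 40 <= k -> 2 * k - 1 < INR m ->
  PI * exp (- (INR m / 2)) <= sqrt (PI / (2 * k)) / k.
Proof.
  intros Hk Hm. assert (HPI := PI_RGT_0). assert (HPI4 := PI_4).
  destruct (sqrt_pi_over_2k k) as [Hu0 Hu2]; [lra|].
  apply sq_le; [apply Rlt_le, Rdiv_lt_0_compat; lra|].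
  assert (E1 : exp (- (INR m / 2)) <= exp (1 / 2 - k)) by (apply exp_le_mono; lra).
  assert (E2 : exp (1 / 2 - k) ^ 2 * exp (2 * k) = exp 1).
  { simpl. rewrite Rmult_1_r, <- !exp_plus. f_equal. field. }
  assert (E3 : (2 * k) ^ 4 / 24 <= exp (2 * k)).
  { eapply Rle_trans; [|apply (exp_ge_taylor (2 * k) 4); lra]. simpl. nra. }
  assert (E4 := exp_le_3).
  assert (E5 : 0 < exp (- (INR m / 2))) by apply exp_pos.
  assert (E6 : 0 < exp (2 * k)) by apply exp_pos.
  assert (E7 : 0 < exp 1) by apply exp_pos.
  replace ((sqrt (PI / (2 * k)) / k) ^ 2) with (sqrt (PI / (2 * k)) ^ 2 / k ^ 2)
    by (field; lra).
  rewrite Hu2.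
  apply Rle_trans with (PI ^ 2 * exp (1 / 2 - k) ^ 2).
  { replace ((PI * exp (- (INR m / 2))) ^ 2) with (PI ^ 2 * exp (- (INR m / 2)) ^ 2) by ring.
    apply Rmult_le_compat_l; [nra | apply pow_incr; lra]. }
  apply Rmult_le_reg_r with (exp (2 * k) * (2 * k * k ^ 2)); [positivity|].
  replace (PI ^ 2 * exp (1 / 2 - k) ^ 2 * (exp (2 * k) * (2 * k * k ^ 2)))
    with (PI ^ 2 * (exp (1 / 2 - k) ^ 2 * exp (2 * k)) * (2 * k * k ^ 2)) by ring.
  rewrite E2.
  replace (PI / (2 * k) / k ^ 2 * (exp (2 * k) * (2 * k * k ^ 2))) with (PI * exp (2 * k))
    by (field; lra).
  assert (F1 : PI * exp 1 <= 12) by nra.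
  assert (F2 : PI * exp 1 * (2 * k * k ^ 2) <= 24 * k ^ 3)
    by (assert (0 < 2 * k * k ^ 2) by positivity; nra).
  replace (PI ^ 2 * exp 1 * (2 * k * k ^ 2)) with (PI * (PI * exp 1 * (2 * k * k ^ 2))) by ring.
  apply Rmult_le_compat_l; nra.
Qed.

(* Upper bound: take m with 2k - 1 < m <= 2k and n = floor (m/2) in
   [laplace_le_wallis]; the three terms are at most u (1 + 1/k), 6u/k and u/k. *)
Lemma laplace_upper k : 40 <= k -> laplace k <= sqrt (PI / (2 * k)) * (1 + 8 / k).
Proof.
  intros Hk. assert (HPI := PI_RGT_0).
  destruct (sqrt_pi_over_2k k) as [Hu0 Hu2]; [lra|].
  destruct (nat_below (2 * k)) as [m [Hm1 Hm2]]; [lra|].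
  assert (Htail := laplace_tail k m Hk Hm1).
  set (u := sqrt (PI / (2 * k))) in *.
  assert (Hsplit : exists n, (2 * n <= m)%nat /\ 2 * INR n <= INR m <= 2 * INR n + 1).
  { destruct (Nat.Even_or_Odd m) as [[n Hn] | [n Hn]]; exists n; split; try lia;
      rewrite Hn, ?plus_INR, mult_INR; simpl INR; lra. }
  destruct Hsplit as [n [Hnm Hn']].
  assert (HnR : 1 <= INR n) by lra.
  assert (Hn1 : (1 <= n)%nat) by (apply INR_le; simpl; lra).
  assert (Hm1' : (1 <= m)%nat) by (apply INR_le; simpl; lra).
  assert (Hw := laplace_le_wallis k m n Hm2 Hnm).
  rewrite wallis_second_difference in Hw.
  assert (Hmain : wallis (2 * m) <= u * (1 + 1 / k)).
  { apply wallis_le_of_sq; [lia | assert (0 < 1 / k) by (apply Rdiv_lt_0_compat; lra); nra|].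
    replace ((u * (1 + 1 / k)) ^ 2) with (u ^ 2 * (1 + 1 / k) ^ 2) by ring. rewrite Hu2.
    rewrite mult_INR. simpl INR.
    apply Rmult_le_reg_r with (2 * INR m * (2 * k) * k ^ 2); [positivity|].
    field_simplify; try lra.
    assert (T : 4 * k ^ 3 <= 2 * INR m * (k + 1) ^ 2) by nra.
    assert (T2 : PI * (4 * k ^ 3) <= PI * (2 * INR m * (k + 1) ^ 2))
      by (apply Rmult_le_compat_l; lra).
    nra. }
  assert (Hhalf : wallis (2 * n) <= 2 * u).
  { apply wallis_le_of_sq; [lia | nra |].
    replace ((2 * u) ^ 2) with (4 * u ^ 2) by ring. rewrite Hu2.
    rewrite mult_INR. simpl INR.
    apply Rmult_le_reg_r with (2 * INR n * (2 * k)); [positivity|].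
    field_simplify; try lra.
    assert (k <= 2 * INR n) by lra. nra. }
  assert (Hcorr : 2 * INR m * (3 * wallis (2 * n) / ((2 * INR n + 2) * (2 * INR n + 4)))
                  <= 6 * u / k).
  { assert (0 <= wallis (2 * n)) by apply wallis_nonneg.
    apply Rmult_le_reg_r with (k * ((2 * INR n + 2) * (2 * INR n + 4))); [positivity|].
    field_simplify; try nra.
    assert (T1 : k <= INR n + 1) by lra.
    assert (T2 : INR m * wallis (2 * n) <= 2 * k * (2 * u)) by (apply Rmult_le_compat; lra).
    assert (T3 : k * k <= (INR n + 1) * (INR n + 2)) by nra.
    assert (T4 : u * (k * k) <= u * ((INR n + 1) * (INR n + 2)))
      by (apply Rmult_le_compat_l; lra).
    nra. }
  assert (u * (1 + 1 / k) + 6 * u / k + u / k = u * (1 + 8 / k)) by (field; lra).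
  lra.
Qed.

Lemma laplace_asymptotics k : 40 <= k ->
  Rabs (laplace k - sqrt (PI / (2 * k))) <= 8 * sqrt (PI / (2 * k)) / k.
Proof.
  intros Hk. assert (Hlo := laplace_lower k Hk). assert (Hhi := laplace_upper k Hk).
  destruct (sqrt_pi_over_2k k) as [Hu0 _]; [lra|].
  set (u := sqrt (PI / (2 * k))) in *.
  assert (u * (1 - 1 / k) = u - u / k) by (field; lra).
  assert (u * (1 + 8 / k) = u + 8 * u / k) by (field; lra).
  assert (0 < u / k) by (apply Rdiv_lt_0_compat; lra).
  apply Rabs_le. split; lra.
Qed.

Definition phase_integral (k : R) : R := RInt (fun u => exp (- (k * (1 + cos u)))) 0 (2 * PI).

Lemma ex_RInt_phase k a b : ex_RInt (fun u => exp (- (k * (1 + cos u)))) a b.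
Proof. apply ex_RInt_derivable. intros. auto_derive. auto. Qed.

(* Substituting u = 2t and using 1 + cos (2t) = 2 cos² t. *)
Lemma phase_integral_laplace k : phase_integral k = 2 * laplace k.
Proof.
  unfold phase_integral, laplace.
  assert (H := RInt_comp_lin (V := R_CompleteNormedModule)
                 (fun u => exp (- (k * (1 + cos u)))) 2 0 0 PI (ex_RInt_phase _ _ _)).
  replace (2 * 0 + 0) with 0 in H by ring. replace (2 * PI + 0) with (2 * PI) in H by ring.
  rewrite <- H, <- RInt_scal_R by apply ex_RInt_laplace.
  apply RInt_ext_R. intros x _. unfold scal; simpl; unfold mult; simpl.
  replace (2 * x + 0) with (2 * x) by ring. rewrite cos_2a_cos. do 3 f_equal. ring.
Qed.

Lemma RInt_periodic_shift (h : R -> R) c :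
  (forall a b, ex_RInt h a b) -> (forall x, h (x + 2 * PI) = h x) ->
  RInt (fun u => h (u + c)) 0 (2 * PI) = RInt h 0 (2 * PI).
Proof.
  intros Hex Hper.
  assert (Htrans : forall d a b, RInt (fun u => h (u + d)) a b = RInt h (a + d) (b + d)).
  { intros d a b.
    assert (H := RInt_comp_lin (V := R_CompleteNormedModule) h 1 d a b (Hex _ _)).
    rewrite !Rmult_1_l in H. rewrite <- H.
    apply RInt_ext_R. intros x _. unfold scal; simpl; unfold mult; simpl.
    now rewrite !Rmult_1_l. }
  assert (Hwrap : RInt h (2 * PI) (2 * PI + c) = RInt h 0 c).
  { rewrite <- (Rplus_0_l (2 * PI)) at 1. rewrite (Rplus_comm (2 * PI) c).
    rewrite <- Htrans. apply RInt_ext_R. intros x _. apply Hper. }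
  rewrite Htrans, Rplus_0_l, (Rplus_comm (2 * PI) c).
  rewrite <- (RInt_Chasles (V := R_CompleteNormedModule) h c (2 * PI) (c + 2 * PI)) by apply Hex.
  rewrite (Rplus_comm c), Hwrap.
  rewrite <- (RInt_Chasles (V := R_CompleteNormedModule) h 0 c (2 * PI)) by apply Hex.
  unfold plus; simpl. ring.
Qed.

(** Reduction of the envelope density to a one-dimensional phase integral. *)

Lemma polar_form a b :
  exists phi, a = sqrt (a ^ 2 + b ^ 2) * cos phi /\ b = sqrt (a ^ 2 + b ^ 2) * sin phi.
Proof.
  set (K := sqrt (a ^ 2 + b ^ 2)).
  assert (HK0 : 0 <= K) by apply sqrt_pos.
  assert (HK2 : K ^ 2 = a ^ 2 + b ^ 2) by (unfold K; rewrite pow2_sqrt; nra).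
  destruct (Req_dec K 0) as [HKz | HKnz].
  - exists 0. rewrite HKz in HK2. assert (a = 0) by nra. assert (b = 0) by nra.
    subst. rewrite HKz. split; ring.
  - assert (HKp : 0 < K) by lra.
    assert (Hc : -1 <= a / K <= 1).
    { assert ((a / K) ^ 2 <= 1); [|nra].
      replace ((a / K) ^ 2) with (a ^ 2 / K ^ 2) by (field; lra).
      apply Rmult_le_reg_r with (K ^ 2); [positivity|].
      unfold Rdiv. rewrite Rmult_assoc, Rinv_l by nra. nra. }
    assert (Hs : sqrt (1 - (a / K)²) = Rabs b / K).
    { replace (1 - (a / K)²) with ((Rabs b / K) ^ 2).
      - rewrite sqrt_pow2; [auto|].
        apply Rmult_le_pos; [apply Rabs_pos | apply Rlt_le, Rinv_0_lt_compat; auto].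
      - unfold Rsqr. replace ((Rabs b / K) ^ 2) with (Rabs b ^ 2 / K ^ 2) by (field; lra).
        rewrite pow2_abs. replace (a / K * (a / K)) with (a ^ 2 / K ^ 2) by (field; lra).
        rewrite HK2. field. nra. }
    destruct (Rle_dec 0 b).
    + exists (acos (a / K)). rewrite cos_acos, sin_acos, Hs, Rabs_right by (auto; lra).
      split; field; lra.
    + exists (- acos (a / K)).
      rewrite cos_neg, sin_neg, cos_acos, sin_acos, Hs, Rabs_left by (auto; lra).
      split; field; lra.
Qed.

(* In polar coordinates z_j = r_j e^{i t_j}, with k12 = K e^{i phi}, the
   exponent of the Gaussian density is a constant plus
   kappa (1 + cos (t2 - t1 + phi + π)),  kappa = 2 r1 r2 K / D. *)
Lemma polar_exponent k11 k22 K phi r1 r2 t1 t2 D : D <> 0 ->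
  - ((k22 * ((r1 * cos t1) ^ 2 + (r1 * sin t1) ^ 2)
      + k11 * ((r2 * cos t2) ^ 2 + (r2 * sin t2) ^ 2)
      - 2 * ((K * cos phi) * ((r1 * cos t1) * (r2 * cos t2) + (r1 * sin t1) * (r2 * sin t2))
             - (K * sin phi) * ((r1 * cos t1) * (r2 * sin t2) - (r1 * sin t1) * (r2 * cos t2))))
     / D)
  = - ((k22 * r1 ^ 2 + k11 * r2 ^ 2 - 2 * K * r1 * r2) / D)
    + - (2 * r1 * r2 * K / D * (1 + cos (t2 + (phi - t1 + PI)))).
Proof.
  intros HD.
  replace (t2 + (phi - t1 + PI)) with ((t2 - t1) + phi + PI) by ring.
  rewrite neg_cos, cos_plus, cos_minus, sin_minus.
  assert (P1 := sin2_cos2 t1). assert (P2 := sin2_cos2 t2). unfold Rsqr in P1, P2.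
  replace ((r1 * cos t1) ^ 2 + (r1 * sin t1) ^ 2) with (r1 ^ 2) by (simpl; nra).
  replace ((r2 * cos t2) ^ 2 + (r2 * sin t2) ^ 2) with (r2 ^ 2) by (simpl; nra).
  field. exact HD.
Qed.

(* The closed form of the envelope density: the outer phase integral is trivial. *)
Lemma envelope_closed_form k11 k22 kr ki r1 r2 :
  k11 * k22 - (kr ^ 2 + ki ^ 2) <> 0 ->
  envelope_density k11 k22 kr ki r1 r2 =
  r1 * r2 * (2 * PI)
  * (exp (- ((k22 * r1 ^ 2 + k11 * r2 ^ 2 - 2 * sqrt (kr ^ 2 + ki ^ 2) * r1 * r2)
             / (k11 * k22 - (kr ^ 2 + ki ^ 2))))
     / (PI ^ 2 * (k11 * k22 - (kr ^ 2 + ki ^ 2))))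
  * phase_integral (2 * r1 * r2 * sqrt (kr ^ 2 + ki ^ 2) / (k11 * k22 - (kr ^ 2 + ki ^ 2))).
Proof.
  intros HD.
  destruct (polar_form kr ki) as [phi [Hr Hi]].
  set (K := sqrt (kr ^ 2 + ki ^ 2)) in *.
  set (D := k11 * k22 - (kr ^ 2 + ki ^ 2)) in *.
  set (kappa := 2 * r1 * r2 * K / D).
  set (C := exp (- ((k22 * r1 ^ 2 + k11 * r2 ^ 2 - 2 * K * r1 * r2) / D)) / (PI ^ 2 * D)).
  (* For each t1, the inner integral is C J(kappa), by a phase shift. *)
  assert (Hinner : forall t1,
    RInt (fun t2 => cscg2_density k11 k22 kr ki (r1 * cos t1) (r1 * sin t1)
                                  (r2 * cos t2) (r2 * sin t2)) 0 (2 * PI)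
    = C * phase_integral kappa).
  { intros t1. unfold phase_integral.
    rewrite <- (RInt_periodic_shift (fun u => exp (- (kappa * (1 + cos u)))) (phi - t1 + PI))
      by first [ apply ex_RInt_phase
               | intros x; replace (cos (x + 2 * PI)) with (cos x); [reflexivity|];
                 rewrite cos_plus, cos_2PI, sin_2PI; ring ].
    rewrite <- RInt_scal_R by (apply ex_RInt_derivable; intros; auto_derive; auto).
    apply RInt_ext_R. intros t2 _.
    unfold cscg2_density. cbv zeta. fold D. rewrite Hr, Hi, polar_exponent by exact HD.
    rewrite exp_plus. unfold C, kappa. unfold Rdiv. ring. }
  unfold envelope_density. rewrite (RInt_ext_R _ (fun _ => C * phase_integral kappa))
    by (intros; apply Hinner).
  rewrite RInt_const_R. unfold C, kappa. ring.
Qed.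

(** The model in terms of  a = |ρ|,  noise variance s and  σ_E² = b s. *)

(* Determinant of the covariance [[p + s, p ρ], [p conj ρ, p + b s]]. *)
Definition cov_det (p b a s : R) : R := (p + s) * (p + b * s) - p ^ 2 * a ^ 2.

(* Twice the variance of the approximating conditional normal law. *)
Definition cond_var (p b a s : R) : R := p * (1 - a ^ 2) + s + b * s.

(* The closed form of f_{R_X,R_E} given by [envelope_closed_form]. *)
Definition model_density (p b a s r1 r2 : R) : R :=
  r1 * r2 * (2 * PI)
  * (exp (- (((p + b * s) * r1 ^ 2 + (p + s) * r2 ^ 2 - 2 * (p * a) * r1 * r2)
             / cov_det p b a s))
     / (PI ^ 2 * cov_det p b a s))
  * phase_integral (2 * r1 * r2 * (p * a) / cov_det p b a s).

Definition model_approx (p b a s r1 r2 : R) : R :=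
  (2 * r2 * exp (- r2 ^ 2 / p) / p)
  * (exp (- (r1 - a * r2) ^ 2 / cond_var p b a s) / sqrt (PI * cond_var p b a s)).

Definition model_asymptotic (p b r1 r2 : R) : Prop :=
  exists C delta : R, 0 < delta /\
    forall a s : R, 0 <= a < 1 -> 0 < s -> 1 - a ^ 2 + s < delta ->
      Rabs (model_density p b a s r1 r2 - model_approx p b a s r1 r2)
        <= C * sqrt (1 - a ^ 2 + s).

Lemma cov_det_pos p b a s : 0 < p -> 0 < b -> 0 <= a < 1 -> 0 < s -> 0 < cov_det p b a s.
Proof.
  intros Hp Hb Ha Hs. unfold cov_det.
  assert (0 < p ^ 2 * (1 - a ^ 2)) by (apply Rmult_lt_0_compat; [positivity | nra]).
  assert (0 < p * s) by positivity. assert (0 < p * (b * s)) by positivity.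
  assert (0 < b * s * s) by positivity.
  nra.
Qed.

Lemma cov_det_split p b a s : cov_det p b a s = p * cond_var p b a s + b * s ^ 2.
Proof. unfold cov_det, cond_var. ring. Qed.

Lemma cond_var_pos p b a s : 0 < p -> 0 < b -> 0 <= a < 1 -> 0 < s -> 0 < cond_var p b a s.
Proof.
  intros Hp Hb Ha Hs. unfold cond_var.
  assert (0 < b * s) by positivity. assert (0 <= p * (1 - a ^ 2)) by (apply Rmult_le_pos; nra).
  lra.
Qed.

Lemma cond_var_le p b a s : 0 < p -> 0 < b -> 0 <= a < 1 -> 0 < s ->
  cond_var p b a s <= (p + 1 + b) * (1 - a ^ 2 + s).
Proof.
  intros Hp Hb Ha Hs. unfold cond_var.
  assert (0 <= 1 - a ^ 2) by nra.
  assert (0 <= (1 + b) * (1 - a ^ 2)) by (apply Rmult_le_pos; lra).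
  assert (0 < p * s) by positivity.
  nra.
Qed.

Lemma cov_det_le p b a s : 0 < p -> 0 < b -> 0 <= a < 1 -> 0 < s -> 1 - a ^ 2 + s < 1 ->
  cov_det p b a s <= (p * (p + 1 + b) + b) * (1 - a ^ 2 + s).
Proof.
  intros Hp Hb Ha Hs Ht. rewrite cov_det_split.
  assert (H := cond_var_le p b a s Hp Hb Ha Hs).
  assert (p * cond_var p b a s <= p * ((p + 1 + b) * (1 - a ^ 2 + s)))
    by (apply Rmult_le_compat_l; lra).
  assert (Hs2 : s ^ 2 <= 1 - a ^ 2 + s) by (assert (0 <= 1 - a ^ 2) by nra; nra).
  assert (b * s ^ 2 <= b * (1 - a ^ 2 + s)) by (apply Rmult_le_compat_l; lra).
  nra.
Qed.

Lemma rho_modulus rr ri : rho_abs2 rr ri < 1 ->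
  0 <= sqrt (rho_abs2 rr ri) < 1 /\ sqrt (rho_abs2 rr ri) ^ 2 = rho_abs2 rr ri.
Proof.
  intros Ha. assert (Ha0 : 0 <= rho_abs2 rr ri) by (unfold rho_abs2; nra).
  split; [split|].
  - apply sqrt_pos.
  - rewrite <- sqrt_1. apply sqrt_lt_1_alt. lra.
  - now apply pow2_sqrt.
Qed.

Lemma f_RX_RE_model p b rr ri s r1 r2 :
  0 < p -> 0 < b -> 0 < s -> rho_abs2 rr ri < 1 ->
  f_RX_RE p rr ri s (b * s) r1 r2 = model_density p b (sqrt (rho_abs2 rr ri)) s r1 r2.
Proof.
  intros Hp Hb Hs Ha. destruct (rho_modulus rr ri Ha) as [Ha1 Ha2].
  unfold rho_abs2 in *. set (a := sqrt (rr ^ 2 + ri ^ 2)) in *.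
  assert (Hsq : (p * rr) ^ 2 + (p * ri) ^ 2 = p ^ 2 * a ^ 2) by (rewrite Ha2; ring).
  assert (Hmod : sqrt ((p * rr) ^ 2 + (p * ri) ^ 2) = p * a).
  { rewrite Hsq. replace (p ^ 2 * a ^ 2) with ((p * a) ^ 2) by ring.
    apply sqrt_pow2. apply Rmult_le_pos; lra. }
  unfold f_RX_RE, model_density. rewrite envelope_closed_form, Hmod, Hsq; [reflexivity|].
  rewrite Hsq. apply Rgt_not_eq, (cov_det_pos p b a s); assumption.
Qed.

Lemma approx_density_model p b rr ri s r1 r2 : rho_abs2 rr ri < 1 ->
  approx_density p rr ri s (b * s) r1 r2 = model_approx p b (sqrt (rho_abs2 rr ri)) s r1 r2.
Proof.
  intros Ha. destruct (rho_modulus rr ri Ha) as [_ Ha2].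
  unfold approx_density, model_approx, cond_var. cbv zeta. now rewrite Ha2.
Qed.

Lemma envelope_asymptotic_of_model p b r1 r2 : 0 < p -> 0 < b ->
  model_asymptotic p b r1 r2 -> envelope_asymptotic p b r1 r2.
Proof.
  intros Hp Hb [C [delta [Hdelta Hmodel]]]. exists C, delta. split; [exact Hdelta|].
  intros rr ri s Ha Hs Ht.
  rewrite f_RX_RE_model, approx_density_model by assumption.
  destruct (rho_modulus rr ri Ha) as [Ha1 Ha2].
  set (a := sqrt (rho_abs2 rr ri)) in *.
  rewrite <- Ha2 in Ht |- *. apply Hmodel; assumption.
Qed.

Lemma exp_neg_le_one x : 0 <= x -> exp (- x) <= 1.
Proof. intros. rewrite <- exp_0. apply exp_le_mono. lra. Qed.

Lemma exp_neg_le_inv y : 0 < y -> exp (- y) <= 1 / y.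
Proof.
  intros Hy. rewrite exp_Ropp. unfold Rdiv. rewrite Rmult_1_l.
  apply Rinv_le_contravar; [lra|]. assert (H := exp_ineq1_le y). lra.
Qed.

Lemma exp_neg_le_inv_sq y : 0 < y -> exp (- y) <= 2 / y ^ 2.
Proof.
  intros Hy. rewrite exp_Ropp.
  replace (2 / y ^ 2) with (/ (y ^ 2 / 2)) by (field; lra).
  apply Rinv_le_contravar; [positivity|].
  eapply Rle_trans; [|apply (exp_ge_taylor y 2); lra]. simpl. nra.
Qed.

Lemma exp_neg_lipschitz x y : 0 <= x -> 0 <= y -> Rabs (exp (- x) - exp (- y)) <= Rabs (x - y).
Proof.
  assert (Hle : forall x y, 0 <= x <= y -> exp (- x) - exp (- y) <= y - x).
  { intros x0 y0 [H0 H1]. replace (- y0) with (- x0 + - (y0 - x0)) by ring. rewrite exp_plus.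
    assert (exp (- x0) <= 1) by (apply exp_neg_le_one; lra).
    assert (1 - (y0 - x0) <= exp (- (y0 - x0)))
      by (assert (T := exp_ineq1_le (- (y0 - x0))); lra).
    assert (0 < exp (- x0)) by apply exp_pos.
    nra. }
  intros Hx Hy. destruct (Rle_dec x y) as [Hxy | Hxy].
  - assert (exp (- y) <= exp (- x)) by (apply exp_le_mono; lra).
    rewrite Rabs_right, Rabs_left1 by lra. assert (T := Hle x y ltac:(lra)). lra.
  - assert (exp (- x) <= exp (- y)) by (apply exp_le_mono; lra).
    rewrite Rabs_left1, Rabs_right by lra. assert (T := Hle y x ltac:(lra)). lra.
Qed.

Lemma phase_integral_bounds k : 0 <= k -> 0 <= phase_integral k <= 2 * PI.
Proof.
  intros Hk. assert (HPI := PI_RGT_0). unfold phase_integral. split.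
  - apply RInt_ge_0; [lra | apply ex_RInt_phase | intros; apply Rlt_le, exp_pos].
  - assert (Hlen : @eq R (RInt (fun _ => 1) 0 (2 * PI)) (2 * PI))
      by (rewrite RInt_const_R; ring).
    rewrite <- Hlen at 2.
    apply RInt_le; [lra | apply ex_RInt_phase | apply ex_RInt_derivable; intros; auto_derive; auto |].
    intros x _. apply exp_neg_le_one. assert (T := COS_bound x). nra.
Qed.

Lemma le_sqrt_self t : 0 <= t <= 1 -> t <= sqrt t.
Proof. intros. apply sq_le; [apply sqrt_pos|]. rewrite pow2_sqrt by lra. nra. Qed.

(** Off the diagonal (r1 <> r2) both densities are O(sqrt t). *)

(* The Gaussian exponent of the true density is at least p (r1 - r2)² / D,
   hence f <= 8 r1 r2 D / (p (r1 - r2)²)². *)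
Lemma model_density_le p b a s r1 r2 : 0 < p -> 0 < b -> 0 <= a < 1 -> 0 < s ->
  0 < r1 -> 0 < r2 -> r1 <> r2 ->
  0 <= model_density p b a s r1 r2
  /\ model_density p b a s r1 r2 <= 8 * r1 * r2 * cov_det p b a s / (p * (r1 - r2) ^ 2) ^ 2.
Proof.
  intros Hp Hb Ha Hs H1 H2 Hne.
  assert (HPI := PI_RGT_0). assert (HPI1 : 1 <= PI) by (assert (T := PI2_1); lra).
  assert (HD := cov_det_pos p b a s Hp Hb Ha Hs).
  set (D := cov_det p b a s) in *.
  set (Q := (p + b * s) * r1 ^ 2 + (p + s) * r2 ^ 2 - 2 * (p * a) * r1 * r2).
  set (P := p * (r1 - r2) ^ 2).
  assert (HP : 0 < P) by (apply Rmult_lt_0_compat; [lra|];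
                          rewrite <- Rsqr_pow2; apply Rsqr_pos_lt; lra).
  assert (HQ : P <= Q).
  { unfold P, Q. assert (p * a * r1 * r2 <= p * r1 * r2) by (assert (0 < p * r1 * r2) by positivity; nra).
    assert (0 < b * s * r1 ^ 2) by positivity. assert (0 < s * r2 ^ 2) by positivity. nra. }
  assert (HE : exp (- (Q / D)) <= 2 * D ^ 2 / P ^ 2).
  { apply Rle_trans with (exp (- (P / D))).
    - apply exp_le_mono, Ropp_le_contravar, Rmult_le_compat_r; [apply Rlt_le, Rinv_0_lt_compat|]; lra.
    - eapply Rle_trans; [apply exp_neg_le_inv_sq, Rdiv_lt_0_compat; lra|]. right. field. lra. }
  assert (HJ : 0 <= phase_integral (2 * r1 * r2 * (p * a) / D) <= 2 * PI).
  { apply phase_integral_bounds, Rdiv_le_0_compat; [|lra].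
    apply Rmult_le_pos; [positivity | nra]. }
  set (J := phase_integral (2 * r1 * r2 * (p * a) / D)) in *.
  assert (Hf : model_density p b a s r1 r2 = 4 * r1 * r2 * exp (- (Q / D)) / D * (J / (2 * PI))).
  { unfold model_density. fold D Q J. field. lra. }
  assert (HE0 : 0 < exp (- (Q / D))) by apply exp_pos.
  assert (HJ1 : 0 <= J / (2 * PI) <= 1).
  { split; [apply Rdiv_le_0_compat; lra|]. apply Rle_div_l; lra. }
  rewrite Hf. split.
  - apply Rmult_le_pos; [apply Rdiv_le_0_compat; [positivity|] |]; lra.
  - apply Rle_trans with (4 * r1 * r2 * exp (- (Q / D)) / D).
    + rewrite <- (Rmult_1_r (4 * r1 * r2 * exp (- (Q / D)) / D)) at 2.
      apply Rmult_le_compat_l; [apply Rdiv_le_0_compat; [positivity|] |]; lra.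
    + apply Rle_div_l; [lra|].
      replace (8 * r1 * r2 * D / P ^ 2 * D) with (4 * r1 * r2 * (2 * D ^ 2 / P ^ 2)) by (field; lra).
      apply Rmult_le_compat_l; [positivity | exact HE].
Qed.

Lemma half_gap r1 r2 a : 0 <= (1 - a) * r2 -> (1 - a) * r2 <= Rabs (r1 - r2) / 2 ->
  (r1 - r2) ^ 2 / 4 <= (r1 - a * r2) ^ 2.
Proof.
  intros Hpos Hclose.
  assert (Rabs (r1 - r2) <= Rabs (r1 - a * r2) + (1 - a) * r2).
  { replace (r1 - r2) with ((r1 - a * r2) + - ((1 - a) * r2)) by ring.
    eapply Rle_trans; [apply Rabs_triang|].
    rewrite Rabs_Ropp, (Rabs_right ((1 - a) * r2)) by lra. lra. }
  rewrite <- (pow2_abs (r1 - r2)), <- (pow2_abs (r1 - a * r2)).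
  assert (0 <= Rabs (r1 - r2)) by apply Rabs_pos. nra.
Qed.

(* When a r2 is close enough to r2, the Gaussian factor of the approximation
   is bounded by V / (r1 - a r2)² <= 4 V / (r1 - r2)². *)
Lemma model_approx_le p b a s r1 r2 : 0 < p -> 0 < b -> 0 <= a < 1 -> 0 < s ->
  0 < r2 -> r1 <> r2 -> (1 - a) * r2 <= Rabs (r1 - r2) / 2 ->
  0 <= model_approx p b a s r1 r2
  /\ model_approx p b a s r1 r2 <= 8 * r2 * sqrt (cond_var p b a s) / (p * (r1 - r2) ^ 2).
Proof.
  intros Hp Hb Ha Hs H2 Hne Hclose.
  assert (HPI1 : 1 <= PI) by (assert (T := PI2_1); lra).
  assert (HV := cond_var_pos p b a s Hp Hb Ha Hs).
  set (V := cond_var p b a s) in *.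
  assert (HsV : 0 < sqrt V) by (apply sqrt_lt_R0; lra).
  assert (HsPV : sqrt V <= sqrt (PI * V)) by (apply sqrt_le_1_alt; nra).
  set (e := (r1 - r2) ^ 2 / 4).
  assert (He : 0 < e) by (unfold e; apply Rdiv_lt_0_compat; [|lra];
                          rewrite <- Rsqr_pow2; apply Rsqr_pos_lt; lra).
  assert (Hgap : e <= (r1 - a * r2) ^ 2)
    by (apply half_gap; [apply Rmult_le_pos|]; lra).
  assert (Hgauss : exp (- (r1 - a * r2) ^ 2 / V) <= V / e).
  { apply Rle_trans with (exp (- (e / V))).
    - apply exp_le_mono. unfold Rdiv. rewrite <- Ropp_mult_distr_l.
      apply Ropp_le_contravar, Rmult_le_compat_r; [apply Rlt_le, Rinv_0_lt_compat|]; lra.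
    - eapply Rle_trans; [apply exp_neg_le_inv, Rdiv_lt_0_compat; lra|]. right. field. lra. }
  assert (Hrayleigh : exp (- r2 ^ 2 / p) <= 1).
  { unfold Rdiv. rewrite <- Ropp_mult_distr_l. apply exp_neg_le_one. positivity. }
  assert (Hg0 : 0 < exp (- r2 ^ 2 / p)) by apply exp_pos.
  assert (Hg1 : 0 < exp (- (r1 - a * r2) ^ 2 / V)) by apply exp_pos.
  unfold model_approx. fold V. split.
  - apply Rmult_le_pos; apply Rdiv_le_0_compat; try apply sqrt_lt_R0; positivity.
  - apply Rle_trans with ((2 * r2 / p) * ((V / e) / sqrt V)).
    + apply Rmult_le_compat.
      * apply Rdiv_le_0_compat; positivity.
      * apply Rdiv_le_0_compat; [lra | apply sqrt_lt_R0; positivity].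
      * unfold Rdiv. apply Rmult_le_compat_r; [positivity|].
        rewrite <- (Rmult_1_r (2 * r2)) at 2. apply Rmult_le_compat_l; lra.
      * unfold Rdiv. apply Rmult_le_compat; try lra.
        -- apply Rlt_le, Rinv_0_lt_compat, sqrt_lt_R0. positivity.
        -- apply Rinv_le_contravar; lra.
    + right. replace V with (sqrt V ^ 2) at 1 by (apply pow2_sqrt; lra).
      unfold e. field. repeat split; lra.
Qed.

(* For t < 1 the true density is O(t), since D = O(t). *)
Lemma model_density_off_diagonal p b a s r1 r2 : 0 < p -> 0 < b -> 0 <= a < 1 -> 0 < s ->
  0 < r1 -> 0 < r2 -> r1 <> r2 -> 1 - a ^ 2 + s < 1 ->
  model_density p b a s r1 r2
  <= 8 * r1 * r2 * (p * (p + 1 + b) + b) / (p * (r1 - r2) ^ 2) ^ 2 * (1 - a ^ 2 + s).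
Proof.
  intros Hp Hb Ha Hs H1 H2 Hne Ht.
  assert (Hne' : r1 - r2 <> 0) by (intros Heq; apply Hne; lra).
  assert (Hgap : 0 < p * (r1 - r2) ^ 2)
    by (apply Rmult_lt_0_compat; [lra | rewrite <- Rsqr_pow2; apply Rsqr_pos_lt; exact Hne']).
  assert (HD := cov_det_le p b a s Hp Hb Ha Hs Ht).
  eapply Rle_trans; [apply model_density_le; assumption|].
  replace (8 * r1 * r2 * (p * (p + 1 + b) + b) / (p * (r1 - r2) ^ 2) ^ 2 * (1 - a ^ 2 + s))
    with (8 * r1 * r2 * ((p * (p + 1 + b) + b) * (1 - a ^ 2 + s)) / (p * (r1 - r2) ^ 2) ^ 2)
    by (field; auto with real).
  unfold Rdiv. apply Rmult_le_compat_r; [positivity|].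
  apply Rmult_le_compat_l; [positivity | exact HD].
Qed.

(* The approximation is O(sqrt t), since V = O(t). *)
Lemma model_approx_off_diagonal p b a s r1 r2 : 0 < p -> 0 < b -> 0 <= a < 1 -> 0 < s ->
  0 < r2 -> r1 <> r2 -> (1 - a) * r2 <= Rabs (r1 - r2) / 2 ->
  model_approx p b a s r1 r2
  <= 8 * r2 * sqrt (p + 1 + b) / (p * (r1 - r2) ^ 2) * sqrt (1 - a ^ 2 + s).
Proof.
  intros Hp Hb Ha Hs H2 Hne Hclose.
  assert (Hne' : r1 - r2 <> 0) by (intros Heq; apply Hne; lra).
  assert (Hgap : 0 < p * (r1 - r2) ^ 2)
    by (apply Rmult_lt_0_compat; [lra | rewrite <- Rsqr_pow2; apply Rsqr_pos_lt; exact Hne']).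
  assert (HsV : sqrt (cond_var p b a s) <= sqrt (p + 1 + b) * sqrt (1 - a ^ 2 + s)).
  { rewrite <- sqrt_mult_alt by lra. apply sqrt_le_1_alt, cond_var_le; assumption. }
  eapply Rle_trans; [apply model_approx_le; assumption|].
  replace (8 * r2 * sqrt (p + 1 + b) / (p * (r1 - r2) ^ 2) * sqrt (1 - a ^ 2 + s))
    with (8 * r2 * (sqrt (p + 1 + b) * sqrt (1 - a ^ 2 + s)) / (p * (r1 - r2) ^ 2))
    by (field; auto with real).
  unfold Rdiv. apply Rmult_le_compat_r; [positivity|].
  apply Rmult_le_compat_l; [positivity | exact HsV].
Qed.

(* For t below 1/2 and below |r1 - r2| / (2 r2), |f - g| <= f + g = O(sqrt t). *)
Theorem model_asymptotic_off_diagonal p b r1 r2 : 0 < p -> 0 < b ->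
  0 < r1 -> 0 < r2 -> r1 <> r2 -> model_asymptotic p b r1 r2.
Proof.
  intros Hp Hb H1 H2 Hne.
  assert (Hd : 0 < Rabs (r1 - r2)) by (apply Rabs_pos_lt; lra).
  assert (Hgap : 0 < p * (r1 - r2) ^ 2).
  { apply Rmult_lt_0_compat; [lra|]. rewrite <- Rsqr_pow2. apply Rsqr_pos_lt.
    intros Heq; apply Hne; lra. }
  set (C1 := 8 * r1 * r2 * (p * (p + 1 + b) + b) / (p * (r1 - r2) ^ 2) ^ 2).
  set (C2 := 8 * r2 * sqrt (p + 1 + b) / (p * (r1 - r2) ^ 2)).
  assert (HC1 : 0 <= C1) by (unfold C1; apply Rdiv_le_0_compat; positivity).
  exists (C1 + C2), (Rmin (1 / 2) (Rabs (r1 - r2) / (2 * r2))).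
  split; [apply Rmin_pos; [lra | apply Rdiv_lt_0_compat; lra]|].
  intros a s Ha Hs Ht.
  set (t := 1 - a ^ 2 + s) in *.
  assert (Ht0 : 0 < t) by (unfold t; nra).
  assert (Ht1 : t < 1 / 2) by (eapply Rlt_le_trans; [exact Ht | apply Rmin_l]).
  (* (1 - a) r2 <= t r2 < |r1 - r2| / 2 *)
  assert (Hclose : (1 - a) * r2 <= Rabs (r1 - r2) / 2).
  { assert (t < Rabs (r1 - r2) / (2 * r2)) by (eapply Rlt_le_trans; [exact Ht | apply Rmin_r]).
    apply (Rmult_lt_compat_r r2) in H; [|lra].
    replace (Rabs (r1 - r2) / (2 * r2) * r2) with (Rabs (r1 - r2) / 2) in H by (field; lra).
    assert ((1 - a) * r2 <= t * r2) by (apply Rmult_le_compat_r; unfold t; nra). lra. }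
  destruct (model_density_le p b a s r1 r2 Hp Hb Ha Hs H1 H2 Hne) as [Hf0 _].
  destruct (model_approx_le p b a s r1 r2 Hp Hb Ha Hs H2 Hne Hclose) as [Hg0 _].
  assert (Hf := model_density_off_diagonal p b a s r1 r2 Hp Hb Ha Hs H1 H2 Hne ltac:(fold t; lra)).
  assert (Hg := model_approx_off_diagonal p b a s r1 r2 Hp Hb Ha Hs H2 Hne Hclose).
  fold t C1 in Hf. fold t C2 in Hg.
  assert (C1 * t <= C1 * sqrt t) by (apply Rmult_le_compat_l, le_sqrt_self; lra).
  assert (Rabs (model_density p b a s r1 r2 - model_approx p b a s r1 r2)
          <= model_density p b a s r1 r2 + model_approx p b a s r1 r2)
    by (apply Rabs_le; lra).
  lra.
Qed.
(** On the diagonal (r1 = r2 = r) the two densities agree to relative order t. *)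

Lemma abs_sub_le_sq_diff X Y : 0 <= X -> 0 < Y -> Rabs (X - Y) <= Rabs (X ^ 2 - Y ^ 2) / Y.
Proof.
  intros HX HY. replace (X ^ 2 - Y ^ 2) with ((X - Y) * (X + Y)) by ring.
  rewrite Rabs_mult, (Rabs_right (X + Y)) by lra.
  apply Rle_div_r; [lra|]. assert (0 <= Rabs (X - Y)) by apply Rabs_pos. nra.
Qed.

Lemma product_error e1 e2 Z L u Y eL eX eE :
  0 <= e1 <= 1 -> 0 <= Z -> 0 <= u -> 0 <= Y -> 0 <= eL ->
  Rabs (L - u) <= eL * u -> Rabs (Z * u - Y) <= eX * Y -> Rabs (e1 - e2) <= eE ->
  Rabs (e1 * Z * L - Y * e2) <= Y * (eL * (1 + eX) + eX + eE).
Proof.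
  intros He1 HZ Hu HY HeL HL HX HE.
  replace (e1 * Z * L - Y * e2) with (e1 * (Z * (L - u)) + e1 * (Z * u - Y) + Y * (e1 - e2))
    by ring.
  assert (HZu : Z * u <= Y * (1 + eX)).
  { assert (Z * u - Y <= eX * Y) by (eapply Rle_trans; [apply Rle_abs | exact HX]). lra. }
  assert (T1 : Rabs (e1 * (Z * (L - u))) <= eL * (Y * (1 + eX))).
  { rewrite !Rabs_mult, (Rabs_right e1), (Rabs_right Z) by lra.
    apply Rle_trans with (1 * (Z * (eL * u))).
    - apply Rmult_le_compat; try lra; [apply Rmult_le_pos; [lra | apply Rabs_pos]|].
      apply Rmult_le_compat_l; lra.
    - replace (1 * (Z * (eL * u))) with (eL * (Z * u)) by ring.
      apply Rmult_le_compat_l; lra. }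
  assert (T2 : Rabs (e1 * (Z * u - Y)) <= eX * Y).
  { rewrite Rabs_mult, (Rabs_right e1) by lra.
    apply Rle_trans with (1 * Rabs (Z * u - Y)); [|lra].
    apply Rmult_le_compat_r; [apply Rabs_pos | lra]. }
  assert (T3 : Rabs (Y * (e1 - e2)) <= Y * eE).
  { rewrite Rabs_mult, (Rabs_right Y) by lra. apply Rmult_le_compat_l; lra. }
  eapply Rle_trans; [apply Rabs_triang|].
  eapply Rle_trans; [apply Rplus_le_compat_r, Rabs_triang|].
  lra.
Qed.

Section Diagonal.

Variables p b r a s : R.
Hypotheses (Hp : 0 < p) (Hb : 0 < b) (Hr : 0 < r) (Ha : 0 <= a < 1) (Hs : 0 < s).
(* Small-parameter regime: t = 1 - a² + s < 1/2, which forces a > 1/2. *)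
Hypothesis Hsmall : 1 - a ^ 2 + s < 1 / 2.

Local Notation t := (1 - a ^ 2 + s).
Local Notation D := (cov_det p b a s).
Local Notation V := (cond_var p b a s).
Local Notation kappa := (2 * r * r * (p * a) / cov_det p b a s).
Local Notation Z := (4 * r ^ 2 / (PI * cov_det p b a s)).
Local Notation Y := (2 * r / (p * sqrt (PI * cond_var p b a s))).
Local Notation E1 :=
  (((p + b * s) * r ^ 2 + (p + s) * r ^ 2 - 2 * (p * a) * r * r) / cov_det p b a s).
Local Notation E2 := (r ^ 2 / p + (r - a * r) ^ 2 / cond_var p b a s).

Local Notation cD := (p * (p + 1 + b) + b).
Local Notation crho := (2 + 2 * b / p).
Local Notation cE := (r ^ 2 * (b / p + b / p ^ 2)).

Let HPI : 0 < PI := PI_RGT_0.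
Let HD : 0 < D := cov_det_pos p b a s Hp Hb Ha Hs.
Let Ha_half : 1 / 2 < a.
Proof. nra. Qed.
Let Hst : s <= t.
Proof. nra. Qed.
Let Hs_le_V : s <= V.
Proof.
  unfold cond_var. assert (0 < b * s) by positivity.
  assert (0 <= p * (1 - a ^ 2)) by (apply Rmult_le_pos; nra). lra.
Qed.

Lemma diag_density_factor :
  model_density p b a s r r = exp (- E1) * Z * laplace kappa.
Proof. unfold model_density. rewrite phase_integral_laplace. field. lra. Qed.

Lemma diag_approx_factor : model_approx p b a s r r = Y * exp (- E2).
Proof.
  assert (HsV : 0 < sqrt (PI * V)) by (apply sqrt_lt_R0; positivity).
  unfold model_approx.
  replace (- E2) with (- r ^ 2 / p + - (r - a * r) ^ 2 / V) by (field; lra).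
  rewrite exp_plus. field. lra.
Qed.


Lemma diag_kappa_inv : 1 / kappa <= cD * t / (r ^ 2 * p).
Proof.
  assert (HDt := cov_det_le p b a s Hp Hb Ha Hs ltac:(lra)).
  replace (1 / kappa) with (D / (2 * r * r * (p * a))) by (field; repeat split; lra).
  apply Rle_div_l; [positivity|].
  replace (cD * t / (r ^ 2 * p) * (2 * r * r * (p * a)))
    with (cD * t * (2 * a)) by (field; lra).
  assert (0 <= cD * t) by (apply Rmult_le_pos; [positivity | nra]).
  nra.
Qed.

(* In particular kappa >= 40 once t is small, so [laplace_asymptotics] applies. *)
Lemma diag_kappa_large : t < r ^ 2 * p / (40 * cD) -> 40 <= kappa.
Proof.
  intros Hsmall_kappa.
  assert (Hkappa : 0 < kappa) by (apply Rdiv_lt_0_compat; positivity).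
  assert (Hlt : 1 / kappa < 1 / 40).
  { eapply Rle_lt_trans; [apply diag_kappa_inv|].
    apply Rlt_div_l; [positivity|].
    replace (1 / 40 * (r ^ 2 * p)) with (cD * (r ^ 2 * p / (40 * cD))) by (field; apply Rgt_not_eq; positivity).
    apply Rmult_lt_compat_l; [positivity | exact Hsmall_kappa]. }
  apply (Rlt_div_l 1 (1 / 40) kappa Hkappa) in Hlt. lra.
Qed.

(* p² V - D p a = p (p V (1 - a) - a b s²) is O(t) relative to D p a. *)
Lemma diag_prefactor_numerator :
  Rabs (p ^ 2 * V - D * (p * a)) <= crho * t * (D * (p * a)).
Proof.
  rewrite cov_det_split.
  assert (Hlin : 0 <= p * V * (1 - a)) by (apply Rmult_le_pos; [positivity | lra]).
  assert (Hquad : 0 < b * s ^ 2) by positivity.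
  apply Rle_trans with (p * (p * V * (1 - a) + b * s ^ 2)).
  { apply Rabs_le.
    assert (0 <= p * (b * s ^ 2) * (1 - a)) by (apply Rmult_le_pos; [positivity | lra]).
    assert (0 <= p * (p * V) * (1 - a)) by (apply Rmult_le_pos; [positivity | lra]).
    split; nra. }
  assert (T1 : p * V * p / 2 <= (p * V + b * s ^ 2) * (p * a)).
  { assert (p * V * (p / 2) <= p * V * (p * a))
      by (apply Rmult_le_compat_l; [positivity | nra]).
    assert (0 < b * s ^ 2 * (p * a)) by positivity. nra. }
  assert (T2 : p * V * (1 - a) <= p * V * t) by (apply Rmult_le_compat_l; [positivity | nra]).
  assert (T3 : s ^ 2 <= t * V).
  { assert (s * s <= t * s) by (apply Rmult_le_compat_r; lra).
    assert (t * s <= t * V) by (apply Rmult_le_compat_l; lra). simpl. lra. }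
  assert (T4 : crho * t * (p * V * p / 2) = t * p * V * p + b * t * V * p) by (field; lra).
  assert (T5 : crho * t * (p * V * p / 2) <= crho * t * ((p * V + b * s ^ 2) * (p * a))).
  { apply Rmult_le_compat_l; [|exact T1].
    apply Rmult_le_pos; [|lra]. assert (0 < b / p) by (apply Rdiv_lt_0_compat; lra). lra. }
  assert (T6 : p * (b * s ^ 2) <= b * t * V * p) by (assert (0 < p * b) by positivity; nra).
  assert (T7 : p * (p * V * (1 - a)) <= t * p * V * p) by nra.
  nra.
Qed.

(* The Laplace main term of the exact prefactor matches Y to relative order t:
   (Z u)² / Y² = p² V / (D p a). *)
Lemma diag_prefactor : Rabs (Z * sqrt (PI / (2 * kappa)) - Y) <= crho * t * Y.
Proof.
  assert (Hkappa : 0 < kappa) by (apply Rdiv_lt_0_compat; positivity).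
  destruct (sqrt_pi_over_2k kappa Hkappa) as [Hu0 Hu2].
  set (u := sqrt (PI / (2 * kappa))) in *.
  assert (HsPV : 0 < sqrt (PI * V)) by (apply sqrt_lt_R0; positivity).
  assert (HY : 0 < Y) by (apply Rdiv_lt_0_compat; positivity).
  assert (HX2 : (Z * u) ^ 2 = 4 * r ^ 2 / (PI * D * (p * a))).
  { replace ((Z * u) ^ 2) with (Z ^ 2 * u ^ 2) by ring. rewrite Hu2. field. repeat split; lra. }
  assert (HY2 : Y ^ 2 = 4 * r ^ 2 / (p ^ 2 * PI * V)).
  { replace (Y ^ 2) with (4 * r ^ 2 / (p ^ 2 * sqrt (PI * V) ^ 2)) by (field; lra).
    rewrite pow2_sqrt by positivity. field. repeat split; lra. }
  assert (Hsq : Rabs ((Z * u) ^ 2 - Y ^ 2) <= Y ^ 2 * (crho * t)).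
  { replace ((Z * u) ^ 2 - Y ^ 2) with (Y ^ 2 / (D * (p * a)) * (p ^ 2 * V - D * (p * a)))
      by (rewrite HX2, HY2; field; repeat split; lra).
    rewrite Rabs_mult, Rabs_right by (apply Rle_ge, Rdiv_le_0_compat; positivity).
    apply Rle_trans with (Y ^ 2 / (D * (p * a)) * (crho * t * (D * (p * a)))).
    - apply Rmult_le_compat_l; [apply Rdiv_le_0_compat; positivity|].
      apply diag_prefactor_numerator.
    - right. field. repeat split; lra. }
  eapply Rle_trans; [apply abs_sub_le_sq_diff; [positivity | exact HY]|].
  apply Rle_div_l; [exact HY|].
  replace (crho * t * Y * Y) with (Y ^ 2 * (crho * t)) by ring.
  exact Hsq.
Qed.

Lemma diag_exponent_gap :
  E1 - E2 = - (r ^ 2 * ((1 - a) ^ 2 * b * s ^ 2 / (D * V) + b * s ^ 2 / (p * D))).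
Proof.
  assert (HDV := cov_det_split p b a s).
  rewrite HDV. unfold cond_var in *. field.
  assert (0 < p * (p * (1 - a ^ 2) + s + b * s) + b * s ^ 2) by (rewrite <- HDV; lra).
  repeat split; lra.
Qed.

Lemma diag_exponent : Rabs (E1 - E2) <= cE * t.
Proof.
  assert (HDV := cov_det_split p b a s).
  rewrite diag_exponent_gap, Rabs_Ropp.
  assert (F1 : (1 - a) ^ 2 * b * s ^ 2 / (D * V) <= b / p * t).
  { apply Rle_div_l; [positivity|].
    assert (T1 : (1 - a) ^ 2 <= t) by nra.
    assert (T2 : s ^ 2 <= V * V) by nra.
    assert (T3 : p * V <= D) by (rewrite HDV; assert (0 < b * s ^ 2) by positivity; lra).
    assert (T4 : b / p * t * (p * V * V) <= b / p * t * (D * V)).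
    { apply Rmult_le_compat_l; [apply Rmult_le_pos; [apply Rdiv_le_0_compat|]; lra|].
      apply Rmult_le_compat_r; lra. }
    replace (b / p * t * (p * V * V)) with (b * t * (V * V)) in T4 by (field; lra).
    assert (T5 : (1 - a) ^ 2 * b * s ^ 2 <= t * b * s ^ 2).
    { apply Rmult_le_compat_r; [positivity | apply Rmult_le_compat_r; lra]. }
    assert (T6 : t * b * s ^ 2 <= b * t * (V * V)) by (assert (0 < t * b) by positivity; nra).
    lra. }
  assert (F2 : b * s ^ 2 / (p * D) <= b / p ^ 2 * t).
  { apply Rle_div_l; [positivity|].
    assert (T3 : p * s <= D) by (rewrite HDV; assert (0 < b * s ^ 2) by positivity; nra).
    assert (T4 : b / p ^ 2 * t * (p * (p * s)) <= b / p ^ 2 * t * (p * D)).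
    { apply Rmult_le_compat_l; [apply Rmult_le_pos; [apply Rdiv_le_0_compat; positivity | lra]|].
      apply Rmult_le_compat_l; lra. }
    replace (b / p ^ 2 * t * (p * (p * s))) with (b * t * s) in T4 by (field; lra).
    assert (b * s ^ 2 <= b * t * s) by (assert (0 < b * s) by positivity; nra).
    lra. }
  assert (G1 : 0 <= (1 - a) ^ 2 * b * s ^ 2 / (D * V)).
  { apply Rdiv_le_0_compat; [|positivity].
    apply Rmult_le_pos; [apply Rmult_le_pos; [apply pow2_ge_0 | lra] | apply pow2_ge_0]. }
  assert (G2 : 0 <= b * s ^ 2 / (p * D)) by (apply Rdiv_le_0_compat; positivity).
  rewrite Rabs_right by (apply Rle_ge, Rmult_le_pos; [apply pow2_ge_0 | lra]).
  assert (0 < r ^ 2) by positivity. nra.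
Qed.

(* Y t = O(sqrt t), because V >= c t with c = p (1 + b) / (p + 1 + b). *)
Lemma diag_scale :
  Y * t <= 2 * r / (p * sqrt (p * (1 + b) / (p + 1 + b))) * sqrt t.
Proof.
  set (c := p * (1 + b) / (p + 1 + b)).
  assert (Hc : 0 < c) by (apply Rdiv_lt_0_compat; positivity).
  assert (Hcp : c <= p) by (apply Rle_div_l; positivity; nra).
  assert (Hcb : c <= 1 + b) by (apply Rle_div_l; positivity; nra).
  assert (HVt : c * t <= V).
  { unfold cond_var.
    assert (c * (1 - a ^ 2) <= p * (1 - a ^ 2)) by (apply Rmult_le_compat_r; nra).
    assert (c * s <= (1 + b) * s) by (apply Rmult_le_compat_r; lra). nra. }
  assert (HsV : 0 < sqrt (PI * V)) by (apply sqrt_lt_R0; positivity).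
  assert (Hsc : 0 < sqrt c) by (apply sqrt_lt_R0; lra).
  assert (HY : 0 < Y) by (apply Rdiv_lt_0_compat; positivity).
  apply sq_le; [apply Rmult_le_pos; [apply Rdiv_le_0_compat; positivity | apply sqrt_pos]|].
  replace ((2 * r / (p * sqrt c) * sqrt t) ^ 2) with (4 * r ^ 2 / (p ^ 2 * c) * t)
    by (replace (4 * r ^ 2 / (p ^ 2 * c) * t) with (4 * r ^ 2 / (p ^ 2 * sqrt c ^ 2) * sqrt t ^ 2)
          by (rewrite !pow2_sqrt by nra; reflexivity);
        field; lra).
  replace ((Y * t) ^ 2) with (4 * r ^ 2 / (p ^ 2 * sqrt (PI * V) ^ 2) * t ^ 2) by (field; lra).
  rewrite pow2_sqrt by positivity.
  apply Rle_trans with (4 * r ^ 2 / (p ^ 2 * (c * t)) * t ^ 2).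
  - apply Rmult_le_compat_r; [apply pow2_ge_0|]. unfold Rdiv.
    apply Rmult_le_compat_l; [positivity|]. apply Rinv_le_contravar; [positivity|].
    assert (HPI1 : 1 <= PI) by (assert (T := PI2_1); lra).
    apply Rmult_le_compat_l; [positivity | nra].
  - right. field. repeat split; nra.
Qed.

(* Combining the three relative errors through [product_error]: for kappa >= 40,
   |f - g| <= (8/kappa (1 + crho t) + crho t + cE t) Y = O(t) Y. *)
Lemma diag_error : t < r ^ 2 * p / (40 * cD) ->
  Rabs (model_density p b a s r r - model_approx p b a s r r)
  <= (8 * cD / (r ^ 2 * p) * (1 + crho) + crho + cE) * (Y * t).
Proof.
  intros Hsmall_kappa.
  assert (Hk40 := diag_kappa_large Hsmall_kappa).
  assert (HL := laplace_asymptotics kappa Hk40).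
  destruct (sqrt_pi_over_2k kappa ltac:(lra)) as [Hu _].
  replace (8 * sqrt (PI / (2 * kappa)) / kappa) with (8 / kappa * sqrt (PI / (2 * kappa)))
    in HL by (field; lra).
  assert (HY : 0 < Y) by (apply Rdiv_lt_0_compat; [|apply Rmult_lt_0_compat, sqrt_lt_R0]; positivity).
  assert (HE1 : 0 <= E1).
  { apply Rdiv_le_0_compat; [|lra].
    assert (p * a * r * r <= p * r * r) by (assert (0 < p * r * r) by positivity; nra).
    assert (0 < b * s * r ^ 2) by positivity. assert (0 < s * r ^ 2) by positivity. nra. }
  assert (HE2 : 0 <= E2).
  { apply Rplus_le_le_0_compat; apply Rdiv_le_0_compat; try apply pow2_ge_0; lra. }
  assert (He := exp_neg_lipschitz E1 E2 HE1 HE2).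
  assert (HX := diag_prefactor). assert (HE := diag_exponent).
  rewrite diag_density_factor, diag_approx_factor.
  eapply Rle_trans.
  { apply (product_error _ _ _ _ (sqrt (PI / (2 * kappa))) _ (8 / kappa) (crho * t) (cE * t));
      try lra.
    - split; [apply Rlt_le, exp_pos | apply exp_neg_le_one; exact HE1].
    - apply Rdiv_le_0_compat; positivity.
    - apply Rdiv_le_0_compat; lra. }
  assert (HeL : 8 / kappa <= 8 * cD / (r ^ 2 * p) * t).
  { replace (8 / kappa) with (8 * (1 / kappa)) by (field; lra).
    replace (8 * cD / (r ^ 2 * p) * t) with (8 * (cD * t / (r ^ 2 * p))) by (field; lra).
    apply Rmult_le_compat_l; [lra | apply diag_kappa_inv]. }
  assert (Hcrho : 0 < crho) by (assert (0 < b / p) by (apply Rdiv_lt_0_compat; lra); lra).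
  assert (HeX : crho * t <= crho) by (rewrite <- (Rmult_1_r crho) at 2; apply Rmult_le_compat_l; lra).
  replace ((8 * cD / (r ^ 2 * p) * (1 + crho) + crho + cE) * (Y * t))
    with (Y * (8 * cD / (r ^ 2 * p) * t * (1 + crho) + crho * t + cE * t)) by ring.
  apply Rmult_le_compat_l; [lra|].
  assert (0 <= 8 / kappa) by (apply Rdiv_le_0_compat; lra).
  assert (0 <= crho * t) by positivity.
  assert (8 / kappa * (1 + crho * t) <= 8 * cD / (r ^ 2 * p) * t * (1 + crho))
    by (apply Rmult_le_compat; lra).
  lra.
Qed.

End Diagonal.

(* For t below 1/2 and below r² p / (40 cD), [diag_error] and [diag_scale] apply. *)
Theorem model_asymptotic_diagonal p b r : 0 < p -> 0 < b -> 0 < r -> model_asymptotic p b r r.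
Proof.
  intros Hp Hb Hr.
  set (cD := p * (p + 1 + b) + b).
  set (C := (8 * cD / (r ^ 2 * p) * (1 + (2 + 2 * b / p)) + (2 + 2 * b / p)
             + r ^ 2 * (b / p + b / p ^ 2))
            * (2 * r / (p * sqrt (p * (1 + b) / (p + 1 + b))))).
  exists C, (Rmin (1 / 2) (r ^ 2 * p / (40 * cD))).
  split; [apply Rmin_pos; [lra | apply Rdiv_lt_0_compat; unfold cD; positivity]|].
  intros a s Ha Hs Ht.
  assert (Ht1 : 1 - a ^ 2 + s < 1 / 2) by (eapply Rlt_le_trans; [exact Ht | apply Rmin_l]).
  assert (Ht2 : 1 - a ^ 2 + s < r ^ 2 * p / (40 * cD))
    by (eapply Rlt_le_trans; [exact Ht | apply Rmin_r]).
  eapply Rle_trans; [apply diag_error; assumption|].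
  unfold C. rewrite Rmult_assoc. apply Rmult_le_compat_l; [|apply diag_scale; assumption].
  assert (0 < b / p) by (apply Rdiv_lt_0_compat; lra).
  assert (0 < b / p ^ 2) by (apply Rdiv_lt_0_compat; positivity).
  assert (0 < 8 * cD / (r ^ 2 * p)) by (apply Rdiv_lt_0_compat; unfold cD; positivity).
  positivity.
Qed.

Theorem lemma4 (p b b' rA rB rE : R) :
  0 < p -> 0 < b -> 0 < b' -> 0 < rA -> 0 < rB -> 0 < rE ->
  (* pair (R_A, R_E) with sigma_E^2 = b sigma_A^2 *)
  envelope_asymptotic p b rA rE /\
  (* pair (R_B, R_E) with sigma_E^2 = b' sigma_B^2 (same law with A -> B) *)
  envelope_asymptotic p b' rB rE.
Proof.
  intros Hp Hb Hb' HA HB HE.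
  (* Each pair is an instance of the model statement, proved on and off the diagonal. *)
  assert (Hpair : forall c r, 0 < c -> 0 < r -> envelope_asymptotic p c r rE).
  { intros c r Hc Hr. apply envelope_asymptotic_of_model; [exact Hp | exact Hc |].
    destruct (Req_dec r rE) as [-> | Hne].
    - now apply model_asymptotic_diagonal.
    - now apply model_asymptotic_off_diagonal. }
  split; apply Hpair; assumption.
Qed.
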